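(* Let $n\ge1$, $X=\{1,\dots,n\}$, $\mathcal{A}$ the algebra of all functions $X\to\mathbb{R}$ with pointwise operations, $\sigma:X\to X$ a bijection and $\tilde{\sigma}(f)=f\circ\sigma^{-1}$. The centralizer of $\mathcal{A}$ in the skew power series ring $\mathcal{A}[[x;\tilde{\sigma}]]$ is $$C(\mathcal{A})=\Big\{\sum_{n=0}^{\infty} f_nx^n : f_n\in\mathcal{A},\ f_n=0\text{ on } Sep^n(X)\text{ for all } n\ge0\Big\}.$$
   Context: The skew power series ring $\mathcal{A}[[x;\tilde{\sigma}]]$ is the set of formal series $\sum_{n=0}^\infty f_nx^n$, $f_n\in\mathcal{A}$, with coefficientwise addition and multiplication $\big(\sum_n f_nx^n\big)\big(\sum_n g_nx^n\big)=\sum_{n}\big(\sum_{k=0}^n f_k\,\tilde{\sigma}^k(g_{n-k})\big)x^n$ (so $xf=\tilde{\sigma}(f)x$). For an integer $n$, $Sep^n(X)=\{p\in X:\sigma^n(p)\neq p\}$ (so $Sep^0(X)=\emptyset$). *)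

From mathcomp Require Import all_boot all_order all_fingroup all_algebra.
From mathcomp Require Import reals.
Set Implicit Arguments. Unset Strict Implicit. Unset Printing Implicit Defensive.
Import GRing.Theory Num.Theory.
Local Open Scope ring_scope.

Definition sigma_tilde (R : realType) (n : nat) (s : {perm 'I_n})
  (f : 'I_n -> R) : 'I_n -> R := fun p => f ((s^-1)%g p).

(* formal skew power series sum_k F k x^k, F k in A *)
Definition skew_series (R : realType) (n : nat) := nat -> 'I_n -> R.

(* (sum f_k x^k)(sum g_k x^k) = sum_k (sum_{i<=k} f_i * st^i(g_{k-i})) x^k *)
Definition skew_mul (R : realType) (n : nat) (s : {perm 'I_n})
  (F G : skew_series R n) : skew_series R n :=
  fun k p => \sum_(i < k.+1) F i p * iter i (sigma_tilde s) (G (k - i)%N) p.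

Definition const_series (R : realType) (n : nat) (a : 'I_n -> R)
  : skew_series R n := fun k => if k == 0%N then a else (fun _ => 0).

Definition in_centralizer (R : realType) (n : nat) (s : {perm 'I_n})
  (F : skew_series R n) : Prop :=
  forall a : 'I_n -> R,
    skew_mul s F (const_series a) = skew_mul s (const_series a) F.

Definition Sep (n : nat) (s : {perm 'I_n}) (k : nat) : {set 'I_n} :=
  [set p | (s ^+ k)%g p != p].

From mathcomp Require Import all_boot all_order all_fingroup all_algebra.
From mathcomp Require Import reals.
From mathcomp Require Import boolp.
Local Open Scope ring_scope.
Import GRing.Theory.

(* Multiplying a series by a constant [a] on either side only rescales its
   coefficients: [(F a)_k = F_k * (a \o sigma^-k)] and [(a F)_k = a * F_k].
   So [F] commutes with every [a] iff [F_k p * a (sigma^-k p) = F_k p * a p]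
   for all [a]; testing with the indicator of [p] shows that this forces
   [F_k p = 0] exactly when [sigma^k p <> p]. *)

Lemma permV_fixE (T : finType) (s : {perm T}) (x : T) :
  ((s^-1)%g x == x) = (s x == x).
Proof. by apply/eqP/eqP => sx; rewrite -{1}sx ?permKV ?permK. Qed.

Lemma Sep_expgV (n : nat) (s : {perm 'I_n}) (k : nat) (p : 'I_n) :
  (p \in Sep s k) = (((s^-1) ^+ k)%g p != p).
Proof. by rewrite inE expgVn permV_fixE. Qed.

Lemma iter_sigma_tilde (R : realType) (n : nat) (s : {perm 'I_n}) (k : nat)
    (a : 'I_n -> R) :
  iter k (sigma_tilde s) a = fun p => a (((s^-1) ^+ k)%g p).
Proof.
elim: k => [|k IHk] /=; apply: funext => p.
  by rewrite expg0 perm1.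
by rewrite IHk /sigma_tilde expgS permM.
Qed.

Lemma skew_mul_const_r (R : realType) (n : nat) (s : {perm 'I_n})
    (F : skew_series R n) (a : 'I_n -> R) (k : nat) (p : 'I_n) :
  skew_mul s F (const_series a) k p = F k p * a (((s^-1) ^+ k)%g p).
Proof.
rewrite /skew_mul big_ord_recr /= subnn iter_sigma_tilde big1 ?add0r //.
move=> i _; have /negbTE k_i_neq0 : (k - i)%N != 0%N by rewrite subn_eq0 -ltnNge.
by rewrite /const_series k_i_neq0 iter_sigma_tilde mulr0.
Qed.

Lemma skew_mul_const_l (R : realType) (n : nat) (s : {perm 'I_n})
    (F : skew_series R n) (a : 'I_n -> R) (k : nat) (p : 'I_n) :
  skew_mul s (const_series a) F k p = a p * F k p.
Proof. by rewrite /skew_mul big_ord_recl /= subn0 big1 ?addr0 // => i _; rewrite mul0r. Qed.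

Lemma in_centralizerE (R : realType) (n : nat) (s : {perm 'I_n})
    (F : skew_series R n) :
  in_centralizer s F <->
  (forall (a : 'I_n -> R) (k : nat) (p : 'I_n),
      F k p * a (((s^-1) ^+ k)%g p) = a p * F k p).
Proof.
split=> [FC a k p | Fcoef a].
  by rewrite -skew_mul_const_r -(@skew_mul_const_l _ _ s) FC.
do 2 apply: funext => ?.
by rewrite skew_mul_const_r skew_mul_const_l Fcoef.
Qed.

Theorem theorem10 (R : realType) (n : nat) (hn : (1 <= n)%N)
  (s : {perm 'I_n}) (F : skew_series R n) :
  in_centralizer s F <->
  (forall (k : nat) (p : 'I_n), p \in Sep s k -> F k p = 0).
Proof.
rewrite in_centralizerE; split=> [Fcoef k p | F_Sep a k p].
  rewrite Sep_expgV => p_moved.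
  have := Fcoef (fun q => (q == p)%:R) k p.
  by rewrite eqxx (negbTE p_moved) mulr0 mul1r.
have [/F_Sep -> | ] := boolP (p \in Sep s k); first by rewrite mulr0 mul0r.
by rewrite Sep_expgV negbK => /eqP ->; rewrite mulrC.
Qed.
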